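(* Let $\mathcal{L}_{\rm TM}$ be the Thue–Morse language and let ${\rm S}:\mathcal{L}_{\rm TM}\to\mathbb{N}$ be a homomorphism. Put $p={\rm S}(a)$, $q={\rm S}(b)$. Then $${\rm S}(\mathcal{L}_{\rm TM})=\big(R_{p+q,0}\cup R_{p+q,p}\cup R_{p+q,q}\cup R_{p+q,2p}\cup R_{p+q,2q}\big)\setminus\{0\}.$$
   Context: $\mathbb{N}=\{1,2,3,\dots\}$. Let $\theta$ be the Thue–Morse morphism on $\{a,b\}$, $\theta(a)=ab$, $\theta(b)=ba$. The Thue–Morse language $\mathcal{L}_{\rm TM}$ is the set of all nonempty finite words occurring as factors of $\theta^n(a)$ for some $n\ge0$ (equivalently, of the infinite Thue–Morse word $\theta^\infty(a)=abbabaab\cdots$). A homomorphism ${\rm S}:\mathcal{L}_{\rm TM}\to\mathbb{N}$ is a map with ${\rm S}(w_1\cdots w_n)={\rm S}(w_1)+\cdots+{\rm S}(w_n)$, determined by ${\rm S}(a),{\rm S}(b)\in\mathbb{N}$. For integers $r\ge1$, $s\ge0$, $R_{r,s}=\{s,\ r+s,\ 2r+s,\dots\}=\{rn+s: n\ge0\}$. *)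

From mathcomp Require Import all_boot.
Set Implicit Arguments. Unset Strict Implicit. Unset Printing Implicit Defensive.

Definition letter := bool.
Definition la : letter := false.
Definition lb : letter := true.

Definition theta (w : seq letter) : seq letter :=
  flatten [seq (if x then [:: lb; la] else [:: la; lb]) | x <- w].

Definition in_LTM (w : seq letter) : Prop :=
  w <> [::] /\ exists n : nat, infix w (iter n theta [:: la]).

Definition Shom (p q : nat) (w : seq letter) : nat :=
  \sum_(x <- w) (if x then q else p).

Definition R_set (r s : nat) (m : nat) : Prop := exists n : nat, m = r * n + s.

From mathcomp Require Import all_boot.
From mathcomp Require Import zify.
Set Implicit Arguments. Unset Strict Implicit.

(* Every Thue–Morse factor is a factor of some theta v, and every prefix of
   theta v is balanced up to one letter, so the letter counts |w|_a, |w|_b of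
   a factor w differ by at most 2; S(w) = p |w|_a + q |w|_b then lies in one
   of the five progressions.  Conversely, by induction along theta, for every
   n and all letters x, y some u of length n makes x u y a factor (x' denotes
   the letter other than x); its image x x' theta(u) y y' contains theta(u),
   theta(u) y and x' theta(u) y, of weights (p+q) n, (p+q) n + S(y) and
   (p+q) n + S(x') + S(y). *)

Lemma theta_cons x s : theta (x :: s) = x :: ~~ x :: theta s.
Proof. by rewrite /theta /=; case: x. Qed.

Lemma theta_cat s1 s2 : theta (s1 ++ s2) = theta s1 ++ theta s2.
Proof. by rewrite /theta map_cat flatten_cat. Qed.

Lemma theta_rcons s y : theta (rcons s y) = theta s ++ [:: y; ~~ y].
Proof. by rewrite -cats1 theta_cat theta_cons. Qed.

Lemma size_theta s : size (theta s) = (size s).*2.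
Proof. by elim: s => [|x s IH] //=; rewrite theta_cons /= IH doubleS. Qed.

Section Weight.

Variables p q : nat.

Lemma Shom_cons x s : Shom p q (x :: s) = (if x then q else p) + Shom p q s.
Proof. by rewrite /Shom big_cons. Qed.

Lemma Shom_cat s1 s2 : Shom p q (s1 ++ s2) = Shom p q s1 + Shom p q s2.
Proof. by rewrite /Shom big_cat. Qed.

Lemma Shom_theta s : Shom p q (theta s) = (p + q) * size s.
Proof.
elim: s => [|x s IH]; first by rewrite /Shom big_nil muln0.
by rewrite theta_cons !Shom_cons IH; case: x => /=; lia.
Qed.

Lemma Shom_count s : Shom p q s = p * count_mem la s + q * count_mem lb s.
Proof.
elim: s => [|x s IH]; first by rewrite /Shom big_nil !muln0.
by rewrite Shom_cons IH /= /la /lb; case: x => /=; lia.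
Qed.

Lemma Shom_gt0 s : 0 < p -> 0 < q -> s <> [::] -> 0 < Shom p q s.
Proof. by case: s => [|x s] // p_gt0 q_gt0 _; rewrite Shom_cons; case: x; lia. Qed.

End Weight.

Definition tm_factor (w : seq letter) : Prop :=
  exists n, infix w (iter n theta [:: la]).

Lemma tm_factor_theta w : tm_factor w -> tm_factor (theta w).
Proof.
case=> n /infixP [s1 [s2 iter_n]]; exists n.+1.
by rewrite iterS iter_n !theta_cat infix_infix.
Qed.

Lemma tm_factor_infix w v : tm_factor w -> infix v w -> tm_factor v.
Proof. by case=> n w_fac v_w; exists n; apply: infix_trans v_w w_fac. Qed.

Lemma tm_factor_bracket n x y : exists u, size u = n /\ tm_factor (x :: rcons u y).
Proof.
elim/ltn_ind: n x y => -[_ x y|n IH x y].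
  by exists [::]; split => //; exists 3; case: x; case: y.
(* theta (x u y') = x x' theta(u) y' y  and  theta (x u y) = x x' theta(u) y y' *)
have half_lt : n./2 < n.+1 by lia.
have [u [size_u fac_u]] := IH n./2 half_lt x (if odd n then ~~ y else y).
exists (~~ x :: (if odd n then rcons (theta u) (~~ y) else theta u)); split.
  have := odd_double_half n.
  by case: (odd n); rewrite /= ?size_rcons size_theta size_u /=; lia.
apply: tm_factor_infix (tm_factor_theta fac_u) _.
rewrite theta_cons theta_rcons; apply/infixP; exists [::].
by case: (odd n); rewrite ?negbK; [exists [::] | exists [:: ~~ y]];
  rewrite /= -?cats1 -?catA ?cats0.
Qed.

Lemma tm_factor_theta_between n x y :
  exists u, size u = n /\ tm_factor (x :: theta u ++ [:: y]).
Proof.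
have [u [size_u fac_u]] := tm_factor_bracket n (~~ x) y.
exists u; split => //; apply: tm_factor_infix (tm_factor_theta fac_u) _.
rewrite theta_cons theta_rcons negbK; apply/infixP; exists [:: ~~ x], [:: ~~ y].
by rewrite /= -catA.
Qed.

Lemma tm_factor_infix_theta w : tm_factor w -> exists v, infix w (theta v).
Proof.
case=> -[|n] w_fac; first by exists [:: la]; apply: infix_trans w_fac _.
by exists (iter n theta [:: la]); rewrite -iterS.
Qed.

Lemma count_take_theta v i :
  count_mem la (take i (theta v)) <= count_mem lb (take i (theta v)) + 1 /\
  count_mem lb (take i (theta v)) <= count_mem la (take i (theta v)) + 1.
Proof.
elim: v i => [|x v IH] [|[|i]] //; rewrite theta_cons //=; first by case: x.
by have := IH i; case: x => /=; lia.
Qed.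

Lemma count_infix_theta v w : infix w (theta v) ->
  count_mem la w <= count_mem lb w + 2 /\ count_mem lb w <= count_mem la w + 2.
Proof.
case/infixP=> s1 [s2 theta_v].
have := count_take_theta v (size s1); have := count_take_theta v (size s1 + size w).
rewrite theta_v (take_size_cat _ (erefl (size s1))) catA.
by rewrite (take_size_cat _ (size_cat s1 w)) !count_cat; lia.
Qed.

Lemma tm_factor_balanced w : tm_factor w ->
  count_mem la w <= count_mem lb w + 2 /\ count_mem lb w <= count_mem la w + 2.
Proof. by case/tm_factor_infix_theta=> v; apply: count_infix_theta. Qed.

Lemma balanced_weight_R p q a b : a <= b + 2 -> b <= a + 2 ->
  let m := p * a + q * b in
  R_set (p + q) 0 m \/ R_set (p + q) p m \/ R_set (p + q) q m
    \/ R_set (p + q) (2 * p) m \/ R_set (p + q) (2 * q) m.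
Proof.
move=> a_le b_le m; rewrite {}/m.
have [->|[->|[->|[->|->]]]] :
  a = b \/ a = b + 1 \/ b = a + 1 \/ a = b + 2 \/ b = a + 2 by lia.
- by left; exists b; lia.
- by right; left; exists b; lia.
- by right; right; left; exists a; lia.
- by right; right; right; left; exists b; lia.
- by right; right; right; right; exists a; lia.
Qed.

Lemma in_LTM_theta_between p q n (x y : letter) (s1 s2 : seq letter) m :
  suffix s1 [:: x] -> prefix s2 [:: y] -> ~~ nilp (s1 ++ s2) || (0 < n) ->
  m = (p + q) * n + Shom p q (s1 ++ s2) -> exists w, in_LTM w /\ Shom p q w = m.
Proof.
case/suffixP=> t1 x_def /prefixP [t2 y_def] nonempty ->.
have [u [size_u fac_u]] := tm_factor_theta_between n x y.
exists (s1 ++ theta u ++ s2); split; last first.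
  by rewrite !Shom_cat Shom_theta size_u; lia.
split.
  move/(congr1 size); move: nonempty; rewrite /nilp !size_cat size_theta size_u /=.
  lia.
apply: tm_factor_infix fac_u _; apply/infixP; exists t1, t2.
by rewrite -cat1s x_def y_def -!catA.
Qed.

Theorem theorem7 (p q : nat) (hp : 0 < p) (hq : 0 < q) (m : nat) :
  (exists w, in_LTM w /\ Shom p q w = m) <->
  ((R_set (p + q) 0 m \/ R_set (p + q) p m \/ R_set (p + q) q m
    \/ R_set (p + q) (2 * p) m \/ R_set (p + q) (2 * q) m) /\ m <> 0).
Proof.
split=> [[w [[w_ne0 w_fac] <-]] | [m_R m_ne0]].
  have [a_le b_le] := tm_factor_balanced w_fac.
  split; first by rewrite Shom_count; exact: balanced_weight_R.
  by have := Shom_gt0 hp hq w_ne0; lia.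
case: m_R => [[n m_def]|[[n m_def]|[[n m_def]|[[n m_def]|[n m_def]]]]].
- apply: (@in_LTM_theta_between p q n la la [::] [::]) => //.
    by case: n m_def => [|n] // m_def; rewrite m_def muln0 in m_ne0.
  by rewrite m_def /Shom big_nil.
- apply: (@in_LTM_theta_between p q n la la [::] [:: la]) => //.
  by rewrite m_def /Shom big_seq1.
- apply: (@in_LTM_theta_between p q n lb lb [::] [:: lb]) => //.
  by rewrite m_def /Shom big_seq1.
- apply: (@in_LTM_theta_between p q n la la [:: la] [:: la]) => //.
  by rewrite m_def /Shom big_cons big_seq1 /=; lia.
- apply: (@in_LTM_theta_between p q n lb lb [:: lb] [:: lb]) => //.
  by rewrite m_def /Shom big_cons big_seq1 /=; lia.
Qed.
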